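(* Let $d,p\ge1$, $X=(X_1,\dots,X_d)\in\mathbb{R}^d$, $\Sigma$ a symmetric positive definite $d\times d$ matrix with $S=\Sigma^{-1}=(s_{lm})$, and let $h(\mathbf{x})=\sum_{\mathbf{k}\in\Omega}a_{\mathbf{k}}H_{\mathbf{k}}(\mathbf{x})$ with real coefficients $a_{\mathbf{k}}$, where $\Omega=\{\mathbf{k}\in\mathbb{N}^d:|\mathbf{k}|_1\le p\}$. Suppose the real family $(\tilde\varphi_{\mathbf{k}})$ satisfies the recursion system (R) for $(S,X,(a_\mathbf{k}),p)$, and let $C$ be the associated constant defined below. Then $\varphi(\mathbf{x}):=\sum_{\mathbf{k}\in\Omega}\tilde\varphi_{\mathbf{k}}H_{\mathbf{k}}(\mathbf{x})$ satisfies, for all $\mathbf{x}\in\mathbb{R}^d$, $$-(\mathbf{x}-X)^T\Sigma^{-1}\nabla\varphi(\mathbf{x})+\Delta\varphi(\mathbf{x})=-h(\mathbf{x})+C,$$ equivalently $\nabla^T\big(\mathcal{N}(\mathbf{x};X,\Sigma)\nabla\varphi(\mathbf{x})\big)=(-h(\mathbf{x})+C)\,\mathcal{N}(\mathbf{x};X,\Sigma)$.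
   Context: Multi-index notation: $\mathbf{k}=(k_1,\dots,k_d)\in\mathbb{N}^d$, $|\mathbf{k}|_1=\sum_l k_l$, $\mathbf{e}_l$ is the $l$-th standard unit vector. $H_k$ denotes the (physicists') Hermite polynomial of degree $k$ ($H_0=1$, $H_1(x)=2x$, $H_{k+1}(x)=2xH_k(x)-2kH_{k-1}(x)$), and $H_{\mathbf{k}}(\mathbf{x})=\prod_{l=1}^dH_{k_l}(x_l)$. $\mathcal{N}(\mathbf{x};\mu,\Sigma)$ is the Gaussian density with mean $\mu$ and covariance $\Sigma$. Recursion system (R) for $(S,X,(a_\mathbf{k}),p)$, with $S=(s_{lm})$ symmetric: the family $(\tilde\varphi_{\mathbf{k}})_{\mathbf{k}\in\mathbb{Z}^d}$ satisfies $\tilde\varphi_{\mathbf{k}}=0$ whenever $|\mathbf{k}|_1>p$ or some component of $\mathbf{k}$ is negative, and for every $\mathbf{q}\in\mathbb{N}^d$ with $1\le|\mathbf{q}|_1\le p$: $$\sum_{l=1}^d s_{ll}q_l\tilde\varphi_{\mathbf{q}}+\sum_{l\ne m}s_{lm}(q_m+1)\tilde\varphi_{\mathbf{q}+\mathbf{e}_m-\mathbf{e}_l}=a_{\mathbf{q}}+\sum_{l,m=1}^d 2s_{lm}(q_m+1)X_l\tilde\varphi_{\mathbf{q}+\mathbf{e}_m}-\sum_{l\neq m}2s_{lm}(q_m+1)(q_l+1)\tilde\varphi_{\mathbf{q}+\mathbf{e}_m+\mathbf{e}_l}+\sum_{l=1}^d2(2-s_{ll})(q_l+1)(q_l+2)\tilde\varphi_{\mathbf{q}+2\mathbf{e}_l}.$$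 The associated constant is $C:=a_{\mathbf{0}}+\sum_{l,m=1}^d2s_{lm}X_l\tilde\varphi_{\mathbf{e}_m}-\sum_{l\ne m}2s_{lm}\tilde\varphi_{\mathbf{e}_m+\mathbf{e}_l}+\sum_{l=1}^d4(2-s_{ll})\tilde\varphi_{2\mathbf{e}_l}$. ($\tilde\varphi_{\mathbf 0}$ is arbitrary.) *)

From HB Require Import structures.
From mathcomp Require Import all_boot all_order all_algebra.
From mathcomp Require Import all_classical all_reals all_analysis.
Set Implicit Arguments. Unset Strict Implicit. Unset Printing Implicit Defensive.
Import Order.TTheory GRing.Theory Num.Theory.
Import numFieldNormedType.Exports.
Local Open Scope ring_scope.

Section Defs.
Variable R : realType.

(* (H_n x, H_{n+1} x) for the physicists' Hermite polynomials *)
Fixpoint hermite_pair (n : nat) (x : R) : R * R :=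
  match n with
  | 0 => (1, 2 * x)
  | n'.+1 => let: (a, b) := hermite_pair n' x in
             (b, 2 * x * b - 2 * (n'.+1)%:R * a)
  end.

Definition hermite (n : nat) (x : R) : R := (hermite_pair n x).1.

Variable d : nat.

Definition hermiteM (k : 'I_d -> nat) (x : 'rV[R]_d) : R :=
  \prod_(l < d) hermite (k l) (x 0 l).

Definition norm1 (k : 'I_d -> nat) : nat := (\sum_(l < d) k l)%N.

(* Sum over Omega = { k in N^d : |k|_1 <= p } ; every such k has
   components <= p, so it is enumerated by {ffun 'I_d -> 'I_p.+1}. *)
Definition sumOmega (p : nat) (F : ('I_d -> nat) -> R) : R :=
  \sum_(k : {ffun 'I_d -> 'I_p.+1} | (norm1 (fun l => k l) <= p)%N)
     F (fun l => nat_of_ord (k l)).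

Definition zidx (k : 'I_d -> nat) : 'I_d -> int := fun l => (k l)%:Z.
Definition evec (m : 'I_d) : 'I_d -> int := fun i => (i == m)%:Z.
Definition addz (u v : 'I_d -> int) : 'I_d -> int := fun i => u i + v i.
Definition subz (u v : 'I_d -> int) : 'I_d -> int := fun i => u i - v i.

Definition phi_support (p : nat) (phi : ('I_d -> int) -> R) : Prop :=
  forall k : 'I_d -> int,
    ((exists l, k l < 0) \/ (\sum_(l < d) k l > p%:Z)) -> phi k = 0.

Definition recursion_eq (S : 'M[R]_d) (X : 'rV[R]_d) (a : ('I_d -> nat) -> R)
  (phi : ('I_d -> int) -> R) (q : 'I_d -> nat) : Prop :=
  let qz := zidx q in
  \sum_(l < d) S l l * (q l)%:R * phi qz
  + \sum_(l < d) \sum_(m < d | m != l)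
       S l m * (q m).+1%:R * phi (subz (addz qz (evec m)) (evec l))
  = a q
  + \sum_(l < d) \sum_(m < d)
       2 * S l m * (q m).+1%:R * X 0 l * phi (addz qz (evec m))
  - \sum_(l < d) \sum_(m < d | m != l)
       2 * S l m * (q m).+1%:R * (q l).+1%:R
         * phi (addz (addz qz (evec m)) (evec l))
  + \sum_(l < d)
       2 * (2 - S l l) * (q l).+1%:R * (q l).+2%:R
         * phi (addz qz (addz (evec l) (evec l))).

Definition recursion_system (S : 'M[R]_d) (X : 'rV[R]_d)
  (a : ('I_d -> nat) -> R) (p : nat) (phi : ('I_d -> int) -> R) : Prop :=
  phi_support p phi /\
  forall q : 'I_d -> nat, (1 <= norm1 q <= p)%N -> recursion_eq S X a phi q.

Definition assoc_const (S : 'M[R]_d) (X : 'rV[R]_d)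
  (a : ('I_d -> nat) -> R) (phi : ('I_d -> int) -> R) : R :=
  let z := zidx (fun _ => 0%N) in
  a (fun _ => 0%N)
  + \sum_(l < d) \sum_(m < d) 2 * S l m * X 0 l * phi (addz z (evec m))
  - \sum_(l < d) \sum_(m < d | m != l)
       2 * S l m * phi (addz (addz z (evec m)) (evec l))
  + \sum_(l < d) 4 * (2 - S l l) * phi (addz z (addz (evec l) (evec l))).

Definition ebasis (l : 'I_d) : 'rV[R]_d := delta_mx 0 l.

Definition partial (l : 'I_d) (f : 'rV[R]_d -> R) : 'rV[R]_d -> R :=
  fun x => 'D_(ebasis l) f x.

Definition laplacian (f : 'rV[R]_d -> R) (x : 'rV[R]_d) : R :=
  \sum_(l < d) partial l (partial l f) x.

End Defs.

(* Both sides are Hermite series.  Differentiation and multiplication by a coordinate act on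
   Hermite series by shifting coefficients, since H_k' = 2 k H_(k-1) and
   2 x H_k = H_(k+1) + 2 k H_(k-1).  After reindexing the shifted sums over Z^d, the left-hand
   side becomes the Hermite series whose coefficient at q is the difference of the two sides of
   the equation of (R) at q, minus a_q.  Hence it is -a_q for 1 <= |q|_1 <= p, -a_0 + C at
   q = 0, and 0 off Omega, which are exactly the coefficients of -h + C. *)

From HB Require Import structures.
From mathcomp Require Import all_boot all_order all_algebra.
From mathcomp Require Import all_classical all_reals all_analysis.
From mathcomp Require Import finmap ring zify.
Import Order.TTheory GRing.Theory Num.Theory.
Import numFieldNormedType.Exports.
Local Open Scope ring_scope.

Set Implicit Arguments. Unset Strict Implicit. Unset Printing Implicit Defensive.

Section MultiIndices.
Variable d : nat.

Lemma addzA (u v w : 'I_d -> int) : addz (addz u v) w = addz u (addz v w).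
Proof. by apply/funext => i; rewrite /addz addrA. Qed.

Lemma addzAC (u v w : 'I_d -> int) : addz (addz u v) w = addz (addz u w) v.
Proof. by apply/funext => i; rewrite /addz addrAC. Qed.

Lemma subzK (u v : 'I_d -> int) : addz (subz u v) v = u.
Proof. by apply/funext => i; rewrite /addz /subz subrK. Qed.

Lemma addzK (u v : 'I_d -> int) : subz (addz u v) v = u.
Proof. by apply/funext => i; rewrite /addz /subz addrK. Qed.

Lemma addz_subzC (u v w : 'I_d -> int) : addz (subz u v) w = subz (addz u w) v.
Proof. by apply/funext => i; rewrite /addz /subz addrAC. Qed.

Lemma evecE (m i : 'I_d) : evec m i = (i == m)%:Z.
Proof. by []. Qed.

Lemma sum_evec (m : 'I_d) : \sum_(i < d) evec m i = 1.
Proof.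
by rewrite (bigD1 m) //= evecE eqxx big1 ?addr0 // => i /negbTE; rewrite evecE => ->.
Qed.

Lemma sum_addz_evec (k : 'I_d -> int) m :
  \sum_(i < d) addz k (evec m) i = \sum_(i < d) k i + 1.
Proof. by rewrite big_split /= sum_evec. Qed.

Lemma sum_subz_evec (k : 'I_d -> int) m :
  \sum_(i < d) subz k (evec m) i = \sum_(i < d) k i - 1.
Proof. by rewrite sumrB sum_evec. Qed.

Lemma addz_evec_neq (k : 'I_d -> int) m l : l != m -> addz k (evec m) l = k l.
Proof. by rewrite /addz evecE => /negbTE ->; rewrite addr0. Qed.

Lemma subz_evec_neq (k : 'I_d -> int) m l : l != m -> subz k (evec m) l = k l.
Proof. by rewrite /subz evecE => /negbTE ->; rewrite subr0. Qed.

Lemma addz_evec_eq (k : 'I_d -> int) m : addz k (evec m) m = k m + 1.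
Proof. by rewrite /addz evecE eqxx. Qed.

Lemma subz_evec_eq (k : 'I_d -> int) m : subz k (evec m) m = k m - 1.
Proof. by rewrite /subz evecE eqxx. Qed.

Definition omega (n : nat) (k : 'I_d -> int) : bool :=
  [forall l, 0 <= k l] && (\sum_(l < d) k l <= n%:Z).

Lemma omegaP n k :
  reflect ((forall l, 0 <= k l) /\ \sum_(l < d) k l <= n%:Z) (omega n k).
Proof. by apply: (iffP andP) => -[/forallP ? ?]; split=> //; apply/forallP. Qed.

Lemma omega_zidx n (q : 'I_d -> nat) : omega n (zidx q) = (norm1 q <= n)%N.
Proof.
rewrite /omega (_ : [forall l, 0 <= zidx q l]) //=; last by apply/forallP.
rewrite -lez_nat /norm1; congr (_ <= _).
by rewrite -natz natr_sum; apply: eq_bigr => l _; rewrite natz.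
Qed.

Lemma omega_zero n (k : 'I_d -> int) : [forall l, k l == 0] -> omega n k.
Proof.
move=> /forallP k0; apply/omegaP; split => [l|]; first by rewrite (eqP (k0 l)).
by rewrite big1 // => l _; rewrite (eqP (k0 l)).
Qed.

Lemma omega_le n k l : omega n k -> 0 <= k l <= n%:Z.
Proof.
move=> /omegaP[k_ge0 sum_le]; rewrite k_ge0 /=; apply: le_trans sum_le.
by rewrite (bigD1 l) //= lerDl sumr_ge0.
Qed.

Lemma omega_leq n n' k : (n <= n')%N -> omega n k -> omega n' k.
Proof.
move=> le_nn' /omegaP[? sum_le]; apply/omegaP; split=> //.
by apply: le_trans sum_le _; rewrite lez_nat.
Qed.

Lemma omega_subz_evec n k m : omega n (subz k (evec m)) -> omega n.+1 k.
Proof.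
move=> /omegaP[ge0 le]; apply/omegaP; split.
  by move=> l; have := ge0 l; rewrite /subz evecE; case: (l == m) => /=; lia.
(* [lia] only recognizes the big sum as an int atom once it is named *)
by move: le; rewrite sum_subz_evec; set s := \sum_(_ < d) _; lia.
Qed.

Lemma omega_addz_evec n k m :
  omega n.+1 (addz k (evec m)) -> k m != -1 -> omega n k.
Proof.
move=> /omegaP[ge0 le] km; apply/omegaP; split.
  move=> l; have := ge0 l; rewrite /addz evecE.
  by case: eqP => [->|_] /=; lia.
by move: le; rewrite sum_addz_evec; set s := \sum_(_ < d) _; lia.
Qed.

End MultiIndices.

Section LatticeSums.
Variables (R : realType) (d : nat).
Local Open Scope classical_set_scope.

(* Summation over Z^d of a finitely supported family (its value is 0 when the support is
   infinite); multi-indices are packed as {ffun 'I_d -> int} to get a choiceType. *)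
Definition sumZd (F : ('I_d -> int) -> R) : R :=
  \sum_(k \in [set: {ffun 'I_d -> int}]) F k.

Definition supported (n : nat) (F : ('I_d -> int) -> R) : Prop :=
  forall k, ~~ omega n k -> F k = 0.

Lemma supported_omega n F k : supported n F -> F k != 0 -> omega n k.
Proof. by move=> F_supp; apply: contraNT => /F_supp/eqP. Qed.

Lemma sumZd_box n F : supported n F ->
  sumZd F = \sum_(j : {ffun 'I_d -> 'I_n.+1}) F (fun l => (j l)%:Z).
Proof.
move=> F_supp.
pose e (j : {ffun 'I_d -> 'I_n.+1}) : {ffun 'I_d -> int} := [ffun l => (j l)%:Z].
rewrite /sumZd (fsbigTE [fset e j | j in {ffun 'I_d -> 'I_n.+1}]%fset).
  rewrite big_imfset /=; last first.
  move=> j j' _ _ /ffunP eq_jj'; apply/ffunP => l; apply/val_inj.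
  by have := eq_jj' l; rewrite !ffunE => -[].
  by rewrite big_enum /=; apply: eq_bigr => j _; congr F; apply/funext => l; rewrite ffunE.
move=> k k_notin; apply: F_supp; apply: contra k_notin => om.
apply/imfsetP; exists [ffun l => inord `|k l|%N] => //.
apply/ffunP => l; rewrite !ffunE inordK; last by have := omega_le l om; lia.
by have := omega_le l om; lia.
Qed.

Lemma sumZd_shift (s : 'I_d -> int) F : sumZd (fun k => F (addz k s)) = sumZd F.
Proof.
pose sh (t : 'I_d -> int) (k : {ffun 'I_d -> int}) := [ffun l => k l + t l].
have sh_bij : bijective (sh s).
  exists (sh (fun l => - s l)) => k; apply/ffunP => l; rewrite !ffunE ?addrK ?subrK //.
rewrite /sumZd [RHS](reindex_fsbigT _ _ sh_bij); apply: eq_fsbigr => k _.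
by congr F; apply/funext => l; rewrite ffunE.
Qed.

Lemma sumZd_shiftN (s : 'I_d -> int) F : sumZd (fun k => F (subz k s)) = sumZd F.
Proof. exact: (sumZd_shift (fun l => - s l)). Qed.

Lemma sumZdZ a F : sumZd (fun k => a * F k) = a * sumZd F.
Proof. by rewrite /sumZd mulr_fsumr. Qed.

Lemma sumZdD n F G : supported n F -> supported n G ->
  sumZd (fun k => F k + G k) = sumZd F + sumZd G.
Proof.
move=> F_supp G_supp; rewrite !(@sumZd_box n) ?big_split // => k k_notin.
by rewrite F_supp ?G_supp ?addr0.
Qed.

Lemma sumZd_single (k0 : 'I_d -> int) c F :
  (forall k, F k != 0 -> k = k0) -> F k0 = c -> sumZd F = c.
Proof.
move=> F_supp <-; rewrite /sumZd (fsbigTE [fset [ffun l => k0 l]]%fset).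
  by rewrite big_seq_fset1; congr F; apply/funext => l; rewrite ffunE.
move=> k; rewrite inE; apply: contraNeq => /F_supp k_k0.
by apply/eqP/ffunP => l; rewrite ffunE -k_k0.
Qed.

Lemma supported_le n n' F : (n <= n')%N -> supported n F -> supported n' F.
Proof.
by move=> le_nn' F_supp k k_notin; apply: F_supp; apply: contra k_notin; apply: omega_leq.
Qed.

Lemma supportedD n F G : supported n F -> supported n G -> supported n (fun k => F k + G k).
Proof. by move=> F_supp G_supp k k_notin; rewrite F_supp ?G_supp ?addr0. Qed.

Lemma supportedB n F G : supported n F -> supported n G -> supported n (fun k => F k - G k).
Proof. by move=> F_supp G_supp k k_notin; rewrite F_supp ?G_supp ?subr0. Qed.

Lemma supportedMl n a F : supported n F -> supported n (fun k => a k * F k).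
Proof. by move=> F_supp k k_notin; rewrite F_supp ?mulr0. Qed.

Lemma supportedMr n F G : supported n F -> supported n (fun k => F k * G k).
Proof. by move=> F_supp k k_notin; rewrite F_supp ?mul0r. Qed.

Lemma supported_sum (I : finType) n (F : I -> ('I_d -> int) -> R) :
  (forall i, supported n (F i)) -> supported n (fun k => \sum_i F i k).
Proof. by move=> F_supp k k_notin; rewrite big1 // => i _; apply: F_supp. Qed.

Lemma supported_subz_evec n m F :
  supported n F -> supported n.+1 (fun k => F (subz k (evec m))).
Proof.
by move=> F_supp k k_notin; apply: F_supp; apply: contra k_notin; apply: omega_subz_evec.
Qed.

Lemma supported_addz_evec n m F :
  supported n.+1 F -> supported n (fun k => (k m + 1)%:~R * F (addz k (evec m))).
Proof.
move=> F_supp k k_notin; have [km|km] := eqVneq (k m) (-1); first by rewrite km mul0r.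
by rewrite F_supp ?mulr0 //; apply: contra k_notin => /omega_addz_evec; apply.
Qed.

End LatticeSums.

Section Hermite.
Variable R : realType.

Lemma hermiteS n (x : R) :
  hermite n.+1 x = 2 * x * hermite n x - 2 * n%:R * hermite n.-1 x.
Proof.
case: n => [|n]; first by rewrite /hermite /= mulr0 mul0r subr0 mulr1.
by rewrite /hermite /=; case: (hermite_pair n x).
Qed.

Lemma is_derive_hermite n (x : R) :
  is_derive x 1 (hermite n) (2 * n%:R * hermite n.-1 x).
Proof.
suff [] : is_derive x 1 (hermite n) (2 * n%:R * hermite n.-1 x) /\
          is_derive x 1 (hermite n.+1) (2 * n.+1%:R * hermite n x) by [].
elim: n => [|n [IHn IHSn]].
  have -> : hermite 0 = cst (1 : R) by [].
  have -> : hermite 1 = 2 \*: (@id R).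
    by apply/funext => y; rewrite hermiteS /= mulr0 mul0r subr0 mulr1.
  by rewrite mulr0 mul0r mulr1; split; [exact: is_derive_cst | exact: is_derive_eq].
split=> //.
have -> : hermite n.+2 = 2 \*: (@id R) * hermite n.+1 - (2 * n.+1%:R) \*: hermite n.
  by apply/funext => y; rewrite hermiteS.
by apply: is_derive_eq; rewrite (hermiteS n x) /= /GRing.scale /= !mulrS; ring.
Qed.

Lemma is_derive_big (I : finType) (f : I -> R -> R) (df : I -> R) (a : R) :
  (forall i, is_derive a 1 (f i) (df i)) ->
  is_derive a 1 (fun t => \sum_i f i t) (\sum_i df i).
Proof.
move=> f_df; rewrite -fct_sumE.
by elim/big_ind2 : _ => //; [exact: is_derive_cst | move=> *; exact: is_deriveD].
Qed.

End Hermite.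

Section HermiteSeries.
Variables (R : realType) (d : nat).
Implicit Types (c : ('I_d -> int) -> R) (x y : 'rV[R]_d).

(* Negative indices are read through their absolute value; this junk value never
   matters, since every coefficient family below vanishes off N^d. *)
Definition hermiteZ (k : 'I_d -> int) (x : 'rV[R]_d) : R :=
  \prod_(l < d) hermite `|k l|%N (x 0 l).

Definition hseries (c : ('I_d -> int) -> R) (x : 'rV[R]_d) : R :=
  sumZd (fun k => c k * hermiteZ k x).

Lemma hermiteZ_split m k k' (x : 'rV[R]_d) : (forall l, l != m -> k' l = k l) ->
  hermiteZ k' x = hermite `|k' m|%N (x 0 m) * \prod_(l < d | l != m) hermite `|k l|%N (x 0 l).
Proof.
move=> kk'; rewrite /hermiteZ (bigD1 m) //=; congr (_ * _).
by apply: eq_bigr => l /kk' ->.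
Qed.

Lemma hermiteZ_mulx m k (x : 'rV[R]_d) : 0 <= k m ->
  2 * x 0 m * hermiteZ k x =
  hermiteZ (addz k (evec m)) x + 2 * (k m)%:~R * hermiteZ (subz k (evec m)) x.
Proof.
move=> km_ge0.
rewrite [hermiteZ k x](@hermiteZ_split m k) //.
rewrite (@hermiteZ_split m k (addz k _)); last exact: addz_evec_neq.
rewrite (@hermiteZ_split m k (subz k _)); last exact: subz_evec_neq.
rewrite /addz /subz evecE eqxx.
have [n ->] : exists n : nat, k m = n by exists `|k m|%N; rewrite gez0_abs.
have -> : `|(n%:Z + 1)%R|%N = n.+1 by lia.
case: n => [|n]; first by rewrite (hermiteS 0) /=; ring.
have -> : `|(n.+1%:Z - 1)%R|%N = n by lia.
by rewrite (hermiteS n.+1) /=; ring.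
Qed.

Lemma partial_line m (f : 'rV[R]_d -> R) (y : 'rV[R]_d) (df : R) :
  is_derive (0 : R) 1 (fun t : R => f (t *: ebasis R m + y)) df -> partial m f y = df.
Proof.
move=> [_ <-]; rewrite /partial /derive; congr (lim (_ @ 0^'))%classic.
by apply/funext => h /=; rewrite addr0 scale0r add0r [_%:A]mulr1.
Qed.

Lemma is_derive_hermiteZ m k (y : 'rV[R]_d) : 0 <= k m ->
  is_derive (0 : R) 1 (fun t : R => hermiteZ k (t *: ebasis R m + y))
    (2 * (k m)%:~R * hermiteZ (subz k (evec m)) y).
Proof.
move=> km_ge0.
have line t l : (t *: ebasis R m + y) 0 l = (if l == m then t else 0) + y 0 l.
  by rewrite !mxE /=; case: eqP => _; rewrite ?mulr1 ?mulr0.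
pose P := \prod_(l < d | l != m) hermite `|k l|%N (y 0 l).
have -> : (fun t => hermiteZ k (t *: ebasis R m + y)) =
          (hermite `|k m|%N \o shift (y 0 m)) * cst P.
  apply/funext => t /=; rewrite /hermiteZ (bigD1 m) //= line eqxx; congr (_ * _).
  by apply: eq_bigr => l /negbTE l_m; rewrite line l_m add0r.
have dH := is_derive1_comp (is_derive_hermite `|k m|%N (shift (y 0 m) 0))
                            (is_derive_shift 0 1 (y 0 m)).
apply: is_derive_eq (is_deriveM dH (is_derive_cst P (0 : R) (1 : R))) _.
rewrite /= add0r (@hermiteZ_split m k) ?scaler0 ?add0r; last exact: subz_evec_neq.
rewrite -/P /subz evecE eqxx.
have [n ->] : exists n : nat, k m = n by exists `|k m|%N; rewrite gez0_abs.
case: n => [|n]; first by rewrite /= !mulr0 !mul0r scaler0.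
have -> : `|(n.+1%:Z - 1)%R|%N = n by lia.
by rewrite pmulrn /GRing.scale /=; ring.
Qed.

Lemma hseries_box n c x : supported n c ->
  hseries c x = \sum_(j : {ffun 'I_d -> 'I_n.+1})
    c (fun l => (j l)%:Z) * hermiteZ (fun l => (j l)%:Z) x.
Proof. by move=> c_supp; rewrite /hseries (sumZd_box (n := n)) //; apply: supportedMr. Qed.

Lemma hseriesZ a c x : hseries (fun k => a * c k) x = a * hseries c x.
Proof. by rewrite /hseries -sumZdZ; congr sumZd; apply/funext => k; rewrite mulrA. Qed.

Lemma hseriesB n c c' x : supported n c -> supported n c' ->
  hseries (fun k => c k - c' k) x = hseries c x - hseries c' x.
Proof.
move=> c_supp c'_supp; rewrite !(hseries_box (n := n)) // -?sumrB.
  by apply: eq_bigr => j _; rewrite mulrBl.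
by move=> k k_notin; rewrite c_supp ?c'_supp ?subr0.
Qed.

Lemma hseriesD n c c' x : supported n c -> supported n c' ->
  hseries (fun k => c k + c' k) x = hseries c x + hseries c' x.
Proof.
move=> c_supp c'_supp; rewrite !(hseries_box (n := n)) // -?big_split.
  by apply: eq_bigr => j _; rewrite mulrDl.
exact: supportedD.
Qed.

Lemma hseries_sum (I : finType) n (c : I -> ('I_d -> int) -> R) x :
  (forall i, supported n (c i)) ->
  hseries (fun k => \sum_i c i k) x = \sum_i hseries (c i) x.
Proof.
move=> c_supp; rewrite (hseries_box (n := n)); last exact: supported_sum.
under eq_bigr do rewrite mulr_suml.
by rewrite exchange_big; apply: eq_bigr => i _; rewrite (hseries_box (n := n)).
Qed.

Definition partial_coef m (c : ('I_d -> int) -> R) (k : 'I_d -> int) : R :=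
  2 * ((k m + 1)%:~R * c (addz k (evec m))).

Lemma supported_partial_coef n m c : supported n.+1 c -> supported n (partial_coef m c).
Proof. by move/(supported_addz_evec m)/(supportedMl (fun=> 2)). Qed.

Lemma partial_hseries n m c y : supported n c ->
  partial m (hseries c) y = hseries (partial_coef m c) y.
Proof.
move=> c_supp; rewrite (_ : hseries c = fun x => \sum_(j : {ffun 'I_d -> 'I_n.+1})
    c (fun l => (j l)%:Z) * hermiteZ (fun l => (j l)%:Z) x); last first.
  by apply/funext => x; rewrite (hseries_box (n := n)).
apply: partial_line; apply: is_derive_eq.
  by apply: is_derive_big => j; apply: is_deriveZ; apply: is_derive_hermiteZ.
transitivity (sumZd (fun k => c k * (2 * (k m)%:~R * hermiteZ (subz k (evec m)) y))).
  by rewrite (sumZd_box (n := n)) //; apply: supportedMr.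
rewrite -(sumZd_shift (evec m)) /hseries; congr sumZd; apply/funext => k.
by rewrite addzK /partial_coef {2}/addz evecE eqxx /=; ring.
Qed.

Definition mulx_coef l (c : ('I_d -> int) -> R) (k : 'I_d -> int) : R :=
  c (subz k (evec l)) / 2 + (k l + 1)%:~R * c (addz k (evec l)).

Lemma supported_mulx_coef n l c : supported n c -> supported n.+1 (mulx_coef l c).
Proof.
move=> c_supp; apply: supportedD; first exact/supportedMr/supported_subz_evec.
by apply: (supported_le (leqnSn n)); apply/supported_addz_evec/(supported_le (leqnSn n)).
Qed.

Lemma hseries_mulx n l c (x : 'rV[R]_d) : supported n c ->
  x 0 l * hseries c x = hseries (mulx_coef l c) x.
Proof.
move=> c_supp.
transitivity (sumZd (fun k => c k / 2 * hermiteZ (addz k (evec l)) x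
                            + c k * (k l)%:~R * hermiteZ (subz k (evec l)) x)).
  rewrite /hseries -sumZdZ; congr sumZd; apply/funext => k.
  have [->|ck] := eqVneq (c k) 0; first by rewrite !mul0r mulr0 add0r.
  have kl_ge0 : 0 <= k l by have /andP[] := omega_le l (supported_omega c_supp ck).
  have -> : hermiteZ (addz k (evec l)) x =
            2 * x 0 l * hermiteZ k x - 2 * (k l)%:~R * hermiteZ (subz k (evec l)) x.
    by rewrite hermiteZ_mulx // addrK.
  by field.
rewrite (sumZdD (n := n)); try by do 2!apply: supportedMr.
have -> : sumZd (fun k => c k / 2 * hermiteZ (addz k (evec l)) x) =
          sumZd (fun k => c (subz k (evec l)) / 2 * hermiteZ k x).
  by rewrite -[RHS](sumZd_shift (evec l)); congr sumZd; apply/funext => k; rewrite addzK.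
have -> : sumZd (fun k => c k * (k l)%:~R * hermiteZ (subz k (evec l)) x) =
          sumZd (fun k => (k l + 1)%:~R * c (addz k (evec l)) * hermiteZ k x).
  rewrite -[RHS](sumZd_shiftN (evec l)); congr sumZd; apply/funext => k.
  by rewrite subzK {2}/subz evecE eqxx /= [_ * c k]mulrC; congr (_ * _%:~R * _); lia.
rewrite -(sumZdD (n := n.+1)); last 2 first.
- exact/supportedMr/supportedMr/supported_subz_evec.
- by apply/supportedMr/(supported_le (leqnSn n))/supported_addz_evec/(supported_le (leqnSn n)).
by congr sumZd; apply/funext => k; rewrite /mulx_coef mulrDl.
Qed.

Lemma sumOmega_hseries n c x : supported n c ->
  sumOmega n (fun k => c (zidx k) * hermiteM k x) = hseries c x.
Proof.
move=> c_supp; rewrite /sumOmega (hseries_box (n := n)) // big_mkcond /=.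
apply: eq_bigr => j _; case: ifPn => // j_notin.
by rewrite c_supp ?mul0r // omega_zidx.
Qed.

Lemma hseries_const C x :
  hseries (fun k => if [forall l, k l == 0] then C else 0) x = C.
Proof.
apply: (sumZd_single (k0 := fun=> 0)) => [k|]; last first.
  rewrite (_ : [forall l, _] = true); last by apply/forallP.
  by rewrite /hermiteZ big1 ?mulr1.
by case: ifP => [/forallP k0 _|_]; [apply/funext => l; apply/eqP | rewrite mul0r eqxx].
Qed.

End HermiteSeries.

Section Generator.
Variables (R : realType) (d : nat) (S : 'M[R]_d) (X : 'rV[R]_d).
Implicit Types (c : ('I_d -> int) -> R) (x : 'rV[R]_d).

Definition generator_coef (c : ('I_d -> int) -> R) (k : 'I_d -> int) : R :=
  \sum_(l < d) (\sum_(m < d) S l m * (X 0 l * partial_coef m c k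
                                      - mulx_coef l (partial_coef m c) k)
                + partial_coef l (partial_coef l c) k).

Lemma supported_drift_term n c l m : supported n.+1 c ->
  supported n.+1 (fun k => S l m * (X 0 l * partial_coef m c k
                                    - mulx_coef l (partial_coef m c) k)).
Proof.
move=> c_supp; have pc_supp := supported_partial_coef m c_supp.
apply/supportedMl/supportedB; last exact: supported_mulx_coef.
exact/supportedMl/(supported_le (leqnSn n)).
Qed.

Lemma supported_laplacian_term n c l : supported n.+1 c ->
  supported n.+1 (partial_coef l (partial_coef l c)).
Proof.
move=> /(supported_partial_coef l)/(supported_le (leqnSn n))/(supported_partial_coef l).
exact: supported_le.
Qed.

Lemma supported_generator_coef n c : (0 < n)%N -> supported n c ->
  supported n (generator_coef c).
Proof.
case: n => // n _ c_supp; apply: supported_sum => l; apply: supportedD.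
  by apply: supported_sum => m; apply: supported_drift_term.
exact: supported_laplacian_term.
Qed.

Lemma hseries_generator n c x : supported n c ->
  - (\sum_(l < d) \sum_(m < d) (x 0 l - X 0 l) * S l m * partial m (hseries c) x)
  + laplacian (hseries c) x = hseries (generator_coef c) x.
Proof.
move=> c_supp; have c_supp' := supported_le (leqnSn n) c_supp.
have pc_supp m := supported_partial_coef m c_supp'.
rewrite /generator_coef (hseries_sum (n := n.+1)) => [|l]; last first.
  apply: supportedD; last exact: supported_laplacian_term.
  by apply: supported_sum => m; apply: supported_drift_term.
rewrite /laplacian -sumrN -big_split /=; apply: eq_bigr => l _.
rewrite (hseriesD (n := n.+1)); last 2 first.
- by apply: supported_sum => m; apply: supported_drift_term.
- exact: supported_laplacian_term.
rewrite (hseries_sum (n := n.+1)) => [|m]; last exact: supported_drift_term.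
rewrite (_ : partial l (hseries c) = hseries (partial_coef l c)); last first.
  by apply/funext => y; apply: partial_hseries c_supp.
rewrite (partial_hseries _ _ (pc_supp l)) -sumrN; congr (_ + _); apply: eq_bigr => m _.
rewrite hseriesZ (hseriesB (n := n.+1)); last 2 first.
- exact/supportedMl/(supported_le (leqnSn n)).
- exact: supported_mulx_coef.
rewrite hseriesZ -(hseries_mulx _ _ (pc_supp m)) (partial_hseries _ _ c_supp); ring.
Qed.

Lemma intr_zidxS (q : 'I_d -> nat) m : ((zidx q m + 1)%:~R : R) = (q m).+1%:R.
Proof. by rewrite /zidx (_ : 1 = 1%N%:Z) // -PoszD addn1. Qed.

Lemma partial_coef_zidx c q m :
  partial_coef m c (zidx q) = 2 * (q m).+1%:R * c (addz (zidx q) (evec m)).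
Proof. by rewrite /partial_coef intr_zidxS mulrA. Qed.

Lemma mulx_partial_coef_zidx c q l m : m != l ->
  mulx_coef l (partial_coef m c) (zidx q) =
    (q m).+1%:R * c (subz (addz (zidx q) (evec m)) (evec l))
  + 2 * (q m).+1%:R * (q l).+1%:R * c (addz (addz (zidx q) (evec m)) (evec l)).
Proof.
move=> m_l; rewrite /mulx_coef /partial_coef subz_evec_neq // addz_evec_neq //.
rewrite addz_subzC addzAC !intr_zidxS; by field.
Qed.

Lemma mulx_partial_coef_zidx_diag c q l :
  mulx_coef l (partial_coef l c) (zidx q) =
    (q l)%:R * c (zidx q)
  + 2 * (q l).+1%:R * (q l).+2%:R * c (addz (zidx q) (addz (evec l) (evec l))).
Proof.
rewrite /mulx_coef /partial_coef subzK addzA subz_evec_eq addz_evec_eq subrK.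
rewrite /zidx !intrD -!pmulrn !mulrSr; by field.
Qed.

Lemma partial_coef2_zidx c q l :
  partial_coef l (partial_coef l c) (zidx q) =
    4 * (q l).+1%:R * (q l).+2%:R * c (addz (zidx q) (addz (evec l) (evec l))).
Proof.
rewrite /partial_coef addzA addz_evec_eq /zidx !intrD -!pmulrn !mulrSr; ring.
Qed.

Lemma generator_term_zidx c q l :
  \sum_(m < d) S l m * (X 0 l * partial_coef m c (zidx q)
                        - mulx_coef l (partial_coef m c) (zidx q))
  + partial_coef l (partial_coef l c) (zidx q) =
  - (S l l * (q l)%:R * c (zidx q)
     + \sum_(m < d | m != l) S l m * (q m).+1%:R * c (subz (addz (zidx q) (evec m)) (evec l)))
  + \sum_(m < d) 2 * S l m * (q m).+1%:R * X 0 l * c (addz (zidx q) (evec m))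
  - \sum_(m < d | m != l)
      2 * S l m * (q m).+1%:R * (q l).+1%:R * c (addz (addz (zidx q) (evec m)) (evec l))
  + 2 * (2 - S l l) * (q l).+1%:R * (q l).+2%:R * c (addz (zidx q) (addz (evec l) (evec l))).
Proof.
have -> : \sum_(m < d) S l m * (X 0 l * partial_coef m c (zidx q)
                                - mulx_coef l (partial_coef m c) (zidx q)) =
          \sum_(m < d) 2 * S l m * (q m).+1%:R * X 0 l * c (addz (zidx q) (evec m))
          - \sum_(m < d) S l m * mulx_coef l (partial_coef m c) (zidx q).
  by rewrite -sumrB; apply: eq_bigr => m _; rewrite partial_coef_zidx; ring.
rewrite [\sum_(m < d) S l m * mulx_coef _ _ _](bigD1 l) //= mulx_partial_coef_zidx_diag.
rewrite partial_coef2_zidx.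
rewrite [\sum_(m < d | m != l) S l m * mulx_coef _ _ _](eq_bigr (fun m =>
    S l m * (q m).+1%:R * c (subz (addz (zidx q) (evec m)) (evec l))
    + 2 * S l m * (q m).+1%:R * (q l).+1%:R * c (addz (addz (zidx q) (evec m)) (evec l))));
  last by move=> m m_l; rewrite mulx_partial_coef_zidx //; ring.
rewrite big_split /=; ring.
Qed.

Lemma generator_coef_zidx c q :
  generator_coef c (zidx q) =
  - (\sum_(l < d) S l l * (q l)%:R * c (zidx q)
     + \sum_(l < d) \sum_(m < d | m != l)
         S l m * (q m).+1%:R * c (subz (addz (zidx q) (evec m)) (evec l)))
  + \sum_(l < d) \sum_(m < d) 2 * S l m * (q m).+1%:R * X 0 l * c (addz (zidx q) (evec m))
  - \sum_(l < d) \sum_(m < d | m != l)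
      2 * S l m * (q m).+1%:R * (q l).+1%:R * c (addz (addz (zidx q) (evec m)) (evec l))
  + \sum_(l < d) 2 * (2 - S l l) * (q l).+1%:R * (q l).+2%:R
      * c (addz (zidx q) (addz (evec l) (evec l))).
Proof.
rewrite /generator_coef (eq_bigr _ (fun l _ => generator_term_zidx c q l)).
by rewrite !(big_split, sumrN, sumrB).
Qed.

End Generator.

Section Solution.
Variables (R : realType) (d p : nat) (S : 'M[R]_d) (X : 'rV[R]_d).
Variables (a : ('I_d -> nat) -> R) (phi : ('I_d -> int) -> R).
Hypothesis p_gt0 : (0 < p)%N.
Hypothesis phi_rec : recursion_system S X a p phi.

Lemma recursion_supported : supported p phi.
Proof.
move=> k; rewrite negb_and => k_notin; apply: phi_rec.1.
case/orP: k_notin => [/forallPn[l]|]; rewrite -ltNge; first by left; exists l.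
by right.
Qed.

Lemma generator_coef_zero :
  generator_coef S X phi (zidx (fun=> 0%N)) = - a (fun=> 0%N) + assoc_const S X a phi.
Proof.
rewrite generator_coef_zidx /assoc_const /=.
rewrite [X in - (X + _)]big1 => [|l _]; last by rewrite mulr0 mul0r.
rewrite [X in - (_ + X)]big1 => [|l _]; last first.
  apply: big1 => m m_l; rewrite recursion_supported ?mulr0 //.
  apply/negP => /omegaP[ge0 _]; have := ge0 l.
  by rewrite /subz /addz /zidx !evecE eqxx eq_sym (negbTE m_l).
under eq_bigr do under eq_bigr do rewrite mulr1.
under [X in _ - X + _]eq_bigr do under eq_bigr do rewrite !mulr1.
have four : 2 * 2 = 4 :> R by rewrite -natrM.
under [X in _ + X = _]eq_bigr do rewrite mulr1 [2 * _ * 2]mulrAC four.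
ring.
Qed.

Lemma generator_coef_rec q : (1 <= norm1 q <= p)%N ->
  generator_coef S X phi (zidx q) = - a q.
Proof. by move=> /phi_rec.2; rewrite /recursion_eq generator_coef_zidx /= => ->; ring. Qed.

Definition h_coef (k : 'I_d -> int) : R := if omega p k then a (fun l => `|k l|%N) else 0.

Definition C_coef (k : 'I_d -> int) : R :=
  if [forall l, k l == 0] then assoc_const S X a phi else 0.

Lemma generator_coef_solution k : generator_coef S X phi k = C_coef k - h_coef k.
Proof.
rewrite /C_coef /h_coef; case: (boolP (omega p k)) => [k_in|k_notin]; last first.
  rewrite (supported_generator_coef S X p_gt0 recursion_supported) //.
  case: ifP => [/(omega_zero p) k_in|_]; first by rewrite k_in in k_notin.
  by rewrite subr0.
pose q l := `|k l|%N.
have kE : k = zidx q.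
  by apply/funext => l; rewrite /zidx /q gez0_abs //; case/andP: (omega_le l k_in).
rewrite kE in k_in *; have -> : (fun l => `|zidx q l|%N) = q by [].
case: (boolP [forall l, zidx q l == 0]) => [/forallP q0|q_ne0].
  have -> : q = fun=> 0%N by apply/funext => l; have /eqP := q0 l; rewrite /zidx; case.
  by rewrite generator_coef_zero addrC.
rewrite generator_coef_rec ?add0r //; rewrite omega_zidx in k_in; rewrite k_in andbT.
case/forallPn: q_ne0 => l; rewrite /zidx lt0n => ql.
have : (q l <= norm1 q)%N by rewrite /norm1 (bigD1 l) //= leq_addr.
by move: ql; lia.
Qed.

End Solution.

Theorem mainTheorem2 (R : realType) (d p : nat) (X : 'rV[R]_d)
  (Sigma : 'M[R]_d) (a : ('I_d -> nat) -> R) (phit : ('I_d -> int) -> R) :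
  (1 <= d)%N -> (1 <= p)%N ->
  Sigma^T = Sigma ->
  (forall v : 'rV[R]_d, v != 0 -> 0 < (v *m Sigma *m v^T) 0 0) ->
  recursion_system (invmx Sigma) X a p phit ->
  let S := invmx Sigma in
  let h := fun x : 'rV[R]_d => sumOmega p (fun k => a k * hermiteM k x) in
  let phi := fun x : 'rV[R]_d =>
    sumOmega p (fun k => phit (zidx k) * hermiteM k x) in
  let C := assoc_const S X a phit in
  forall x : 'rV[R]_d,
    - (\sum_(l < d) \sum_(m < d) (x 0 l - X 0 l) * S l m * partial m phi x)
    + laplacian phi x
    = - h x + C.
Proof.
move=> _ p_gt0 _ _ phi_rec S h phi C x.
have phi_supp := recursion_supported phi_rec.
have h_supp : supported p (h_coef p a) by move=> k /negbTE k_notin; rewrite /h_coef k_notin.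
have -> : phi = hseries phit by apply/funext => y; apply: sumOmega_hseries.
have -> : h x = hseries (h_coef p a) x.
  rewrite -(sumOmega_hseries x h_supp); apply: eq_bigr => k k_le.
  by rewrite /h_coef omega_zidx k_le.
rewrite (hseries_generator S X x phi_supp) -(hseries_const C x) addrC -(hseriesB (n := p)) //.
  by congr hseries; apply/funext => k; apply: generator_coef_solution.
by move=> k k_notin; case: ifP => // /(omega_zero p) k_in; rewrite k_in in k_notin.
Qed.
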